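(* Let $M\ge 0$ be an integer, let $a_0,\dots,a_M\in\mathbb{R}$ and let $f_M(x)=\sum_{m=0}^M a_m T_m(x)$, where $T_m(x)=\cos(m\arccos x)$ is the $m$-th Chebyshev polynomial. For each integer $n\ge 0$ and $y\in[-1,1]$ define $$\tilde R_n(y)=\int_{-1}^{y} f_M(y-1-t)\,T_n(t)\,\mathrm{d}t ,$$ i.e. $\tilde R_n(y)$ is the convolution $\int_{-1}^{x+1}f_M(x-t)T_n(t)\,\mathrm{d}t$ evaluated at $x=y-1\in[-2,0]$. Then for all $y\in[-1,1]$: $$\tilde R_0(y)=\int_{-1}^{y} f_M(t)\,\mathrm{d}t,$$ $$\tilde R_1(y)=\int_{-1}^{y}\tilde R_0(s)\,\mathrm{d}s-\tilde R_0(y),$$ $$\tilde R_2(y)=4\int_{-1}^{y}\tilde R_1(s)\,\mathrm{d}s+\tilde R_0(y),$$ and for every $n\ge 2$, $$\tilde R_{n+1}(y)=2(n+1)\int_{-1}^{y}\tilde R_n(s)\,\mathrm{d}s+\frac{n+1}{n-1}\tilde R_{n-1}(y)+\frac{2(-1)^n}{n-1}\int_{-1}^{y} f_M(t)\,\mathrm{d}t.$$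
   Context: $T_m$ denotes the Chebyshev polynomial of the first kind of degree $m$ on $[-1,1]$. The function $\tilde R_n$ is the (left-sided, Volterra-type) convolution of $f_M$ and $T_n$, shifted from $x\in[-2,0]$ to $y=x+1\in[-1,1]$. *)

From Stdlib Require Import Reals.
From Coquelicot Require Import Coquelicot.
Open Scope R_scope.

Definition cheb (m : nat) (x : R) : R := cos (INR m * acos x).

(* f_M(x) = sum_{m=0}^M a_m T_m(x)   (sum_f_R0 g M = g 0 + ... + g M) *)
Definition fM (a : nat -> R) (M : nat) (x : R) : R :=
  sum_f_R0 (fun m => a m * cheb m x) M.

Definition Rtilde (a : nat -> R) (M n : nat) (y : R) : R :=
  RInt (fun t => fM a M (y - 1 - t) * cheb n t) (-1) y.

(* Substituting u = y - 1 - t writes R~_n(y) as the Volterra convolution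
   int_{-1}^y f_M(u) T_n(y - 1 - u) du.  By Leibniz's rule, if K' = k then
     d/dy int_{-1}^y f(u) K(y-1-u) du = f(y) K(-1) + int_{-1}^y f(u) k(y-1-u) du,
   so integrating the convolution with kernel k amounts to convolving with K,
   minus K(-1) int_{-1}^y f.  The recurrences then come from the antiderivatives
   T_1 of T_0, (T_2 - T_0)/4 of T_1 and T_{n+1}/(2(n+1)) - T_{n-1}/(2(n-1)) of T_n,
   i.e. from T_n' = n U_{n-1} and 2 T_n = U_n - U_{n-2}, with T_m(-1) = (-1)^m
   giving the boundary terms.  Since acos is meaningless outside [-1,1], we
   differentiate the polynomials defined by the three-term recurrence, which agree
   with cos(m acos x) on [-1,1]. *)

From Stdlib Require Import Reals Lra Lia.
From Coquelicot Require Import Coquelicot.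
Open Scope R_scope.

Section Volterra.

Variable a : R.

Definition volterra (f k : R -> R) (y : R) : R :=
  RInt (fun u => f u * k (y - u + a)) a y.

Lemma continuous_volterra_integrand (f k : R -> R) (y t : R) :
  (forall x, continuous f x) -> (forall x, continuous k x) ->
  continuous (fun u => f u * k (y - u + a)) t.
Proof.
  intros Hf Hk.
  apply (continuous_mult f (fun u => k (y - u + a))); [apply Hf |].
  apply (continuous_comp (fun u => y - u + a) k); [| apply Hk].
  apply (@ex_derive_continuous R_AbsRing R_NormedModule); auto_derive; auto.
Qed.

Lemma ex_RInt_volterra_integrand (f k : R -> R) (y b c : R) :
  (forall x, continuous f x) -> (forall x, continuous k x) ->
  ex_RInt (fun u => f u * k (y - u + a)) b c.
Proof.
  intros Hf Hk. apply (@ex_RInt_continuous R_CompleteNormedModule); intros u _.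
  now apply continuous_volterra_integrand.
Qed.

Lemma continuity_2d_pt_volterra_integrand (f k : R -> R) (z t : R) :
  (forall x, continuous f x) -> (forall x, continuous k x) ->
  continuity_2d_pt (fun u v => f v * k (u - v + a)) z t.
Proof.
  intros Hf Hk. apply continuity_2d_pt_mult.
  - apply (continuity_1d_2d_pt_comp f (fun _ v => v)).
    + apply continuity_pt_filterlim, Hf.
    + apply continuity_2d_pt_id2.
  - apply (continuity_1d_2d_pt_comp k (fun u v => u - v + a)).
    + apply continuity_pt_filterlim, Hk.
    + apply continuity_2d_pt_plus; [apply continuity_2d_pt_minus |].
      * apply continuity_2d_pt_id1.
      * apply continuity_2d_pt_id2.
      * apply continuity_2d_pt_const.
Qed.

Lemma is_derive_volterra_integrand (f K k : R -> R) (z u : R) :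
  (forall x, is_derive K x (k x)) ->
  is_derive (fun w => f u * K (w - u + a)) z (f u * k (z - u + a)).
Proof.
  intros HK.
  replace (f u * k (z - u + a)) with (f u * (1 * k (z - u + a))) by ring.
  apply is_derive_scal, (is_derive_comp K (fun w => w - u + a)); [apply HK |].
  auto_derive; auto.
Qed.

Lemma is_derive_volterra (f K k : R -> R) (y : R) :
  (forall x, continuous f x) -> (forall x, is_derive K x (k x)) ->
  (forall x, continuous k x) ->
  is_derive (volterra f K) y (f y * K a + volterra f k y).
Proof.
  intros Hf HK Hk.
  set (g := fun z u => f u * K (z - u + a)).
  assert (HKc : forall x, continuous K x).
  { intros x; apply (@ex_derive_continuous R_AbsRing R_NormedModule).
    exists (k x); apply HK. }
  assert (Hg_int : forall z b c, ex_RInt (g z) b c).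
  { intros; now apply ex_RInt_volterra_integrand. }
  assert (HDg : forall z u, Derive (fun w => g w u) z = f u * k (z - u + a)).
  { intros; now apply is_derive_unique, is_derive_volterra_integrand. }
  assert (HDg_cont : forall z u,
    continuity_2d_pt (fun z u => Derive (fun w => g w u) z) z u).
  { intros z u.
    apply continuity_2d_pt_ext with (fun z u => f u * k (z - u + a)).
    - intros; now rewrite HDg.
    - now apply continuity_2d_pt_volterra_integrand. }
  assert (Hg_cont : forall z u, continuity_pt (g z) u).
  { intros; apply continuity_pt_filterlim.
    now apply continuous_volterra_integrand. }
  replace (f y * K a + volterra f k y)
    with (RInt (fun u => Derive (fun w => g w u) y) a y + - g y a * 0 + g y y * 1).
  - apply (is_derive_RInt_param_bound_comp g (fun _ => a) (fun z => z)).
    + apply filter_forall; intros; apply Hg_int.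
    + exists posreal_one; apply filter_forall; intros; apply Hg_int.
    + exists posreal_one; apply filter_forall; intros; apply Hg_int.
    + apply (@is_derive_const R_AbsRing R_NormedModule).
    + apply (@is_derive_id R_AbsRing).
    + exists posreal_one; apply filter_forall.
      intros z u _; eexists; now apply is_derive_volterra_integrand.
    + intros; apply HDg_cont.
    + exists posreal_one; intros; apply HDg_cont.
    + exists posreal_one; intros; apply HDg_cont.
    + apply Hg_cont.
    + apply Hg_cont.
  - unfold g, volterra. rewrite (RInt_ext _ (fun u => f u * k (y - u + a))).
    + replace (y - y + a) with a by ring. ring.
    + intros; apply HDg.
Qed.

Lemma continuous_volterra (f k k' : R -> R) (y : R) :
  (forall x, continuous f x) -> (forall x, is_derive k x (k' x)) ->
  (forall x, continuous k' x) ->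
  continuous (volterra f k) y.
Proof.
  intros Hf Hk Hk'. apply (@ex_derive_continuous R_AbsRing R_NormedModule).
  eexists; now apply is_derive_volterra.
Qed.

Lemma volterra_one (f : R -> R) (y : R) : volterra f (fun _ => 1) y = RInt f a y.
Proof. apply RInt_ext; intros; apply Rmult_1_r. Qed.

Lemma volterra_lin (f K1 K2 : R -> R) (c1 c2 y : R) :
  (forall x, continuous f x) ->
  (forall x, continuous K1 x) -> (forall x, continuous K2 x) ->
  volterra f (fun x => c1 * K1 x + c2 * K2 x) y
  = c1 * volterra f K1 y + c2 * volterra f K2 y.
Proof.
  intros Hf HK1 HK2. unfold volterra.
  assert (H1 := ex_RInt_volterra_integrand f K1 y a y Hf HK1).
  assert (H2 := ex_RInt_volterra_integrand f K2 y a y Hf HK2).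
  rewrite (RInt_ext _ (fun u => plus (scal c1 (f u * K1 (y - u + a)))
                                     (scal c2 (f u * K2 (y - u + a))))).
  - rewrite (@RInt_plus R_CompleteNormedModule), !(@RInt_scal R_CompleteNormedModule);
      auto using ex_RInt_scal.
  - intros; cbn; ring.
Qed.

Lemma volterra_comm (f k : R -> R) (y : R) :
  (forall x, continuous f x) -> (forall x, continuous k x) ->
  volterra f k y = RInt (fun t => f (y - t + a) * k t) a y.
Proof.
  intros Hf Hk. unfold volterra.
  set (phi := fun u => f u * k (y - u + a)).
  assert (Hsubst := RInt_comp_lin phi (-1) (y + a) a y).
  replace (-1 * a + (y + a)) with y in Hsubst by ring.
  replace (-1 * y + (y + a)) with a in Hsubst by ring.
  rewrite <- (opp_RInt_swap phi y a), <- Hsubst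
    by now apply ex_RInt_volterra_integrand.
  rewrite (@RInt_scal R_CompleteNormedModule).
  - rewrite (RInt_ext (fun t => phi (-1 * t + (y + a))) (fun t => f (y - t + a) * k t)).
    + set (I := RInt _ a y); cbn; ring.
    + intros t _; unfold phi.
      now replace (y - (-1 * t + (y + a)) + a) with t by ring;
        replace (-1 * t + (y + a)) with (y - t + a) by ring.
  - apply (@ex_RInt_continuous R_CompleteNormedModule); intros u _.
    apply (continuous_comp (fun t => -1 * t + (y + a)) phi).
    + apply (@ex_derive_continuous R_AbsRing R_NormedModule); auto_derive; auto.
    + now apply continuous_volterra_integrand.
Qed.

Lemma RInt_volterra (f K k k' : R -> R) (y : R) :
  (forall x, continuous f x) -> (forall x, is_derive K x (k x)) ->
  (forall x, is_derive k x (k' x)) -> (forall x, continuous k' x) ->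
  RInt (volterra f k) a y = volterra f K y - K a * RInt f a y.
Proof.
  intros Hf HK Hk Hk'.
  assert (Hkc : forall x, continuous k x).
  { intros x; apply (@ex_derive_continuous R_AbsRing R_NormedModule).
    exists (k' x); apply Hk. }
  assert (Hf_int : forall b c, ex_RInt f b c).
  { intros; apply (@ex_RInt_continuous R_CompleteNormedModule); auto. }
  set (F := fun z => volterra f K z - K a * RInt f a z).
  apply is_RInt_unique.
  replace (volterra f K y - K a * RInt f a y) with (minus (F y) (F a)).
  - apply (@is_RInt_derive R_CompleteNormedModule).
    + intros x _. unfold F.
      replace (volterra f k x) with ((f x * K a + volterra f k x) - K a * f x) by ring.
      apply (is_derive_minus (volterra f K) (fun z => K a * RInt f a z)).
      * now apply is_derive_volterra.
      * apply is_derive_scal, (is_derive_RInt f _ a).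
        -- apply filter_forall; intros; apply (@RInt_correct R_CompleteNormedModule), Hf_int.
        -- apply Hf.
    + intros x _. now apply continuous_volterra with k'.
  - unfold F, volterra. rewrite !RInt_point. cbn. ring.
Qed.

End Volterra.

Lemma nat_ind2 (P : nat -> Prop) :
  P 0%nat -> P 1%nat -> (forall n, P n -> P (S n) -> P (S (S n))) -> forall n, P n.
Proof.
  intros H0 H1 HS n.
  enough (P n /\ P (S n)) by tauto.
  induction n as [|n [IHn IHSn]]; auto.
Qed.

Fixpoint chebT (n : nat) (x : R) : R :=
  match n with
  | O => 1
  | S m => match m with O => x | S k => 2 * x * chebT m x - chebT k x end
  end.

Fixpoint chebU (n : nat) (x : R) : R :=
  match n with
  | O => 1
  | S m => match m with O => 2 * x | S k => 2 * x * chebU m x - chebU k x end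
  end.

Lemma chebyshev_recurrence_unique (x : R) (p q : nat -> R) :
  (forall n, p (S (S n)) = 2 * x * p (S n) - p n) ->
  (forall n, q (S (S n)) = 2 * x * q (S n) - q n) ->
  p 0%nat = q 0%nat -> p 1%nat = q 1%nat -> forall n, p n = q n.
Proof.
  intros Hp Hq H0 H1. apply nat_ind2; auto.
  intros n Hn HSn. now rewrite Hp, Hq, Hn, HSn.
Qed.

Lemma cheb_chebT (n : nat) (x : R) : -1 <= x <= 1 -> cheb n x = chebT n x.
Proof.
  intros Hx. revert n.
  apply (chebyshev_recurrence_unique x (fun n => cheb n x)); try reflexivity.
  - intros n. unfold cheb. rewrite !S_INR.
    set (t := acos x). rewrite <- (cos_acos x Hx) at 1. fold t.
    replace ((INR n + 1 + 1) * t) with ((INR n + 1) * t + t) by ring.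
    replace (INR n * t) with ((INR n + 1) * t - t) by ring.
    rewrite cos_plus, cos_minus. ring.
  - unfold cheb. cbn. now rewrite Rmult_0_l, cos_0.
  - unfold cheb. cbn. now rewrite Rmult_1_l, cos_acos.
Qed.

Lemma chebT_m1 (n : nat) : chebT n (-1) = (-1) ^ n.
Proof.
  revert n. apply (chebyshev_recurrence_unique (-1) (fun n => chebT n (-1)) (fun n => (-1) ^ n));
    try reflexivity.
  - intros n; cbn; ring.
  - cbn; ring.
Qed.

Lemma chebT_chebU (n : nat) (x : R) :
  chebT (S (S n)) x = x * chebU (S n) x - chebU n x.
Proof.
  revert n.
  apply (chebyshev_recurrence_unique x (fun n => chebT (S (S n)) x)); try reflexivity;
    intros; cbn; ring.
Qed.

Lemma chebT_diff_chebU (n : nat) (x : R) :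
  2 * chebT (S (S n)) x = chebU (S (S n)) x - chebU n x.
Proof.
  revert n.
  apply (chebyshev_recurrence_unique x (fun n => 2 * chebT (S (S n)) x)); try reflexivity;
    intros; cbn; ring.
Qed.

Lemma continuous_chebU (n : nat) (x : R) : continuous (chebU n) x.
Proof.
  revert n. apply nat_ind2.
  - apply continuous_const.
  - apply (@ex_derive_continuous R_AbsRing R_NormedModule). cbn. auto_derive; auto.
  - intros n Hn HSn.
    apply (continuous_minus (fun x => 2 * x * chebU (S n) x) (chebU n)); auto.
    apply (continuous_mult (fun x => 2 * x) (chebU (S n))); auto.
    apply (@ex_derive_continuous R_AbsRing R_NormedModule). auto_derive; auto.
Qed.

Lemma is_derive_chebT (n : nat) (x : R) :
  is_derive (chebT (S n)) x (INR (S n) * chebU n x).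
Proof.
  revert n. apply nat_ind2.
  - cbn. auto_derive; auto; ring.
  - cbn. auto_derive; auto; ring.
  - intros n Hn HSn.
    replace (INR (S (S (S n))) * chebU (S (S n)) x)
      with (2 * chebT (S (S n)) x + 2 * x * (INR (S (S n)) * chebU (S n) x)
            - INR (S n) * chebU n x).
    + apply (is_derive_minus (fun x => 2 * x * chebT (S (S n)) x) (chebT (S n))); auto.
      apply (is_derive_mult (fun x => 2 * x) (chebT (S (S n)))); auto.
      * auto_derive; auto; ring.
      * intros; apply Rmult_comm.
    + rewrite chebT_chebU. cbn [chebU]. rewrite !S_INR. ring.
Qed.

Lemma continuous_chebT (n : nat) (x : R) : continuous (chebT n) x.
Proof.
  destruct n as [|n].
  - apply continuous_const.
  - apply (@ex_derive_continuous R_AbsRing R_NormedModule).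
    eexists; apply is_derive_chebT.
Qed.

Lemma is_derive_chebT_antiderivative (n : nat) (x : R) :
  is_derive (fun x => / (2 * INR (S (S (S n)))) * chebT (S (S (S n))) x
                      + - / (2 * INR (S n)) * chebT (S n) x)
    x (chebT (S (S n)) x).
Proof.
  replace (chebT (S (S n)) x)
    with (/ (2 * INR (S (S (S n)))) * (INR (S (S (S n))) * chebU (S (S n)) x)
          + - / (2 * INR (S n)) * (INR (S n) * chebU n x)).
  - apply (is_derive_plus (fun x => / (2 * INR (S (S (S n)))) * chebT (S (S (S n))) x)
                          (fun x => - / (2 * INR (S n)) * chebT (S n) x));
      apply is_derive_scal, is_derive_chebT.
  - apply (Rmult_eq_reg_l 2); [| lra].
    rewrite chebT_diff_chebU. field. split; apply not_0_INR; lia.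
Qed.

Definition chebT_series (a : nat -> R) (M : nat) (x : R) : R :=
  sum_f_R0 (fun m => a m * chebT m x) M.

Lemma continuous_chebT_series (a : nat -> R) (M : nat) (x : R) :
  continuous (chebT_series a M) x.
Proof.
  unfold chebT_series. induction M as [|M IHM]; cbn [sum_f_R0].
  - apply (continuous_mult (fun _ => a 0%nat) (chebT 0)).
    + apply continuous_const.
    + apply continuous_chebT.
  - apply (continuous_plus (fun x => sum_f_R0 (fun m => a m * chebT m x) M)
                           (fun x => a (S M) * chebT (S M) x)); [exact IHM |].
    apply (continuous_mult (fun _ => a (S M)) (chebT (S M))).
    + apply continuous_const.
    + apply continuous_chebT.
Qed.

Lemma fM_chebT_series (a : nat -> R) (M : nat) (x : R) :
  -1 <= x <= 1 -> fM a M x = chebT_series a M x.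
Proof.
  intros Hx. apply sum_eq; intros m _. now rewrite cheb_chebT.
Qed.

Section ChebyshevVolterra.

Variable f : R -> R.
Hypothesis f_cont : forall x, continuous f x.

Lemma RInt_volterra_chebT (n : nat) (K : R -> R) (y : R) :
  (forall x, is_derive K x (chebT n x)) ->
  RInt (volterra (-1) f (chebT n)) (-1) y
  = volterra (-1) f K y - K (-1) * volterra (-1) f (chebT 0) y.
Proof.
  intros HK. change (chebT 0) with (fun _ : R => 1). rewrite volterra_one.
  destruct n as [|n].
  - apply (RInt_volterra (-1) f K (chebT 0) (fun _ => 0)); auto.
    + intros; apply (@is_derive_const R_AbsRing R_NormedModule).
    + intros; apply continuous_const.
  - apply (RInt_volterra (-1) f K (chebT (S n)) (fun x => INR (S n) * chebU n x)); auto.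
    + intros; apply is_derive_chebT.
    + intros x. apply (continuous_mult (fun _ => INR (S n)) (chebU n)).
      * apply continuous_const.
      * apply continuous_chebU.
Qed.

Lemma volterra_chebT1 (y : R) :
  volterra (-1) f (chebT 1) y
  = RInt (volterra (-1) f (chebT 0)) (-1) y - volterra (-1) f (chebT 0) y.
Proof.
  rewrite (RInt_volterra_chebT 0 (chebT 1)).
  - cbn [chebT]. ring.
  - intros x. replace (chebT 0 x) with (INR 1 * chebU 0 x) by (cbn; ring).
    apply is_derive_chebT.
Qed.

Lemma volterra_chebT2 (y : R) :
  volterra (-1) f (chebT 2) y
  = 4 * RInt (volterra (-1) f (chebT 1)) (-1) y + volterra (-1) f (chebT 0) y.
Proof.
  rewrite (RInt_volterra_chebT 1 (fun x => / 4 * chebT 2 x + - / 4 * chebT 0 x)).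
  - rewrite volterra_lin by auto using continuous_chebT. cbn [chebT]. field.
  - intros x. cbn [chebT]. auto_derive; auto; field.
Qed.

Lemma volterra_chebT_rec (n : nat) (y : R) :
  volterra (-1) f (chebT (S (S (S n)))) y
  = 2 * INR (S (S (S n))) * RInt (volterra (-1) f (chebT (S (S n)))) (-1) y
    + INR (S (S (S n))) / INR (S n) * volterra (-1) f (chebT (S n)) y
    + 2 * (-1) ^ n / INR (S n) * volterra (-1) f (chebT 0) y.
Proof.
  rewrite (RInt_volterra_chebT _ _ _ (is_derive_chebT_antiderivative n)).
  rewrite volterra_lin by auto using continuous_chebT.
  rewrite !chebT_m1. cbn [pow]. rewrite !S_INR.
  assert (0 <= INR n) by apply pos_INR.
  field. lra.
Qed.

End ChebyshevVolterra.

Lemma RInt_ext_le (g h : R -> R) (b c : R) :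
  b <= c -> (forall t, b <= t <= c -> g t = h t) -> RInt g b c = RInt h b c.
Proof.
  intros Hbc Hgh. apply RInt_ext. intros t.
  rewrite Rmin_left, Rmax_right by exact Hbc. intros Ht. apply Hgh; lra.
Qed.

Lemma Rtilde_volterra (a : nat -> R) (M n : nat) (y : R) :
  -1 <= y <= 1 -> Rtilde a M n y = volterra (-1) (chebT_series a M) (chebT n) y.
Proof.
  intros Hy. rewrite volterra_comm by auto using continuous_chebT_series, continuous_chebT.
  apply RInt_ext_le; [lra |]. intros t Ht.
  rewrite fM_chebT_series, cheb_chebT by lra.
  now replace (y - t + -1) with (y - 1 - t) by ring.
Qed.

Theorem theorem2p2 (M : nat) (a : nat -> R) (y : R) (hy : -1 <= y <= 1) :
  Rtilde a M 0 y = RInt (fun t => fM a M t) (-1) y /\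
  Rtilde a M 1 y = RInt (fun s => Rtilde a M 0 s) (-1) y - Rtilde a M 0 y /\
  Rtilde a M 2 y = 4 * RInt (fun s => Rtilde a M 1 s) (-1) y + Rtilde a M 0 y /\
  (forall n : nat, (2 <= n)%nat ->
     Rtilde a M (S n) y =
       2 * INR (S n) * RInt (fun s => Rtilde a M n s) (-1) y
       + INR (S n) / (INR n - 1) * Rtilde a M (n - 1) y
       + 2 * (-1) ^ n / (INR n - 1) * RInt (fun t => fM a M t) (-1) y).
Proof.
  set (V n := volterra (-1) (chebT_series a M) (chebT n)).
  assert (HR : forall n, Rtilde a M n y = V n y) by (intros; now apply Rtilde_volterra).
  assert (HIR : forall n, RInt (fun s => Rtilde a M n s) (-1) y = RInt (V n) (-1) y).
  { intros n. apply RInt_ext_le; [lra |]. intros s Hs. apply Rtilde_volterra; lra. }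
  assert (HIf : RInt (fun t => fM a M t) (-1) y = V 0%nat y).
  { unfold V. change (chebT 0) with (fun _ : R => 1). rewrite volterra_one.
    apply RInt_ext_le; [lra |]. intros t Ht. apply fM_chebT_series; lra. }
  assert (Hf := continuous_chebT_series a M).
  rewrite HIf, !HR, !HIR. unfold V.
  split; [| split; [| split]].
  - reflexivity.
  - now apply volterra_chebT1.
  - now apply volterra_chebT2.
  - intros n Hn. destruct n as [|[|n]]; [lia | lia |].
    replace (S (S n) - 1)%nat with (S n) by lia.
    rewrite !HR, HIR. unfold V.
    rewrite volterra_chebT_rec by exact Hf.
    replace (INR (S (S n)) - 1) with (INR (S n)) by (rewrite (S_INR (S n)); ring).
    cbn [pow]. field. apply not_0_INR; lia.
Qed.
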